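(* Let $S$ be a finite $p$-group and $\mathcal{A}$ a bifree $S$-algebra. If $\mathcal{A}(S)\neq0$ and there exists an $(S,S)$-invariant $\mathcal{O}$-basis $Y$ of $\mathcal{A}$ with $Y\subseteq\mathcal{A}^\times$, then $\mathcal{A}$ is divisible.
   Context: $\mathcal{O}$ is a complete local noetherian domain with maximal ideal $\mathfrak{m}$ and algebraically closed residue field $k$ of characteristic $p$ (possibly $\mathcal{O}=k$). An interior $S$-algebra is an $\mathcal{O}$-algebra $\mathcal{A}$, free of finite rank as an $\mathcal{O}$-module, with a group homomorphism $S\to\mathcal{A}^\times$; $S\times S$ acts on $\mathcal{A}$ by $(s,t)\cdot a=sat^{-1}$. It is a bifree $S$-algebra if it has an $\mathcal{O}$-basis $Y$ with $sY=Y=Ys$ for all $s\in S$ (an $(S,S)$-invariant basis) on which the left and right $S$-actions are free. For a subgroup $U\le S\times S$ the Brauer quotient is $\mathcal{A}(U)=\mathcal{A}^U/(\mathfrak{m}\mathcal{A}^U+\sum_{V<U}\mathrm{tr}_V^U(\mathcal{A}^V))$. For $P\le S$ and injective homomorphism $\varphi:P\to S$, $\mathcal{A}(\varphi)$ denotes $\mathcal{A}(\Delta(\varphi,P))$ with $\Delta(\varphi,P)=\{(\varphi(p),p):p\in P\}$, and $\mathcal{A}(P)=\mathcal{A}(\iota_P)$ for the inclusion $\iota_P$. The fixed-point fusion presystem $\mathfrak{F}_S(\mathcal{A})$ has objects the subgroups of $S$ and $\mathrm{Hom}(P,Q)=\{\varphi:P\to Q$ injective homomorphism $:\mathcal{A}(\varphi)\neq0\}$.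 $\mathcal{A}$ is divisible if $\mathfrak{F}_S(\mathcal{A})$ contains all inclusions between subgroups of $S$, is closed under composition (so is a category), and every morphism $\varphi:P\to Q$ is an inclusion composed with a group isomorphism $P\to\varphi(P)$ that is an isomorphism in $\mathfrak{F}_S(\mathcal{A})$ (its inverse also lies in $\mathfrak{F}_S(\mathcal{A})$). *)

From HB Require Import structures.
From mathcomp Require Import all_boot all_order all_algebra all_fingroup all_solvable.
Set Implicit Arguments. Unset Strict Implicit. Unset Printing Implicit Defensive.
Import GRing.Theory.
Local Open Scope ring_scope.

Section Coefficients.
Variable O : idomainType.
Variable m : O -> Prop.

Definition is_ideal (I : O -> Prop) : Prop :=
  [/\ I 0, (forall x y, I x -> I y -> I (x + y)) & (forall r x, I x -> I (r * x))].

Definition local_with_max (m : O -> Prop) : Prop :=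
  [/\ is_ideal m, ~ m 1 & forall x, ~ m x -> x \is a GRing.unit].

Definition noetherian_ring : Prop :=
  forall I : O -> Prop, is_ideal I ->
    exists (n : nat) (g : 'I_n -> O), forall x,
      I x <-> exists c : 'I_n -> O, x = \sum_(i < n) c i * g i.

Fixpoint ideal_pow (n : nat) : O -> Prop :=
  match n with
  | 0 => fun _ => True
  | n'.+1 => fun x => exists (k : nat) (a b : 'I_k -> O),
      (forall i, m (a i) /\ ideal_pow n' (b i)) /\ x = \sum_(i < k) a i * b i
  end.

Definition madic_complete : Prop :=
  (forall x, (forall n, ideal_pow n x) -> x = 0) /\
  (forall u : nat -> O, (forall n, ideal_pow n (u n.+1 - u n)) ->
     exists l, forall n, ideal_pow n (u n - l)).

(* the residue field O/m is algebraically closed: every non-constant monic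
   polynomial over O has a root modulo m *)
Definition residue_alg_closed : Prop :=
  forall f : {poly O}, f \is monic -> (1 < size f)%N -> exists a, m f.[a].

Definition residue_char (p : nat) : Prop := prime p /\ m p%:R.

Definition standing_O (p : nat) : Prop :=
  [/\ local_with_max m, noetherian_ring, madic_complete,
      residue_alg_closed & residue_char p].
End Coefficients.

Section Algebras.
Variable O : idomainType.
Variable m : O -> Prop.
Variable A : algType O.
Variable gT : finGroupType.
Variable S : {group gT}.
Variable phi : gT -> A.   (* the structural map S -> A^x *)

Definition interior_map : Prop :=
  phi 1%g = 1 /\ {in S &, forall s t, phi (s * t)%g = phi s * phi t}.

Definition is_basis (n : nat) (b : 'I_n -> A) : Prop :=
  injective b /\
  forall a : A, exists! c : {ffun 'I_n -> O}, a = \sum_(i < n) c i *: b i.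

Definition in_basis n (b : 'I_n -> A) (y : A) : Prop := exists i, b i = y.

Definition SS_invariant n (b : 'I_n -> A) : Prop :=
  forall s, s \in S -> forall y,
    (in_basis b y <-> exists2 y', in_basis b y' & y = phi s * y') /\
    (in_basis b y <-> exists2 y', in_basis b y' & y = y' * phi s).

Definition free_actions n (b : 'I_n -> A) : Prop :=
  forall s, s \in S -> forall y, in_basis b y ->
    (phi s * y = y -> s = 1%g) /\ (y * phi s = y -> s = 1%g).

Definition bifree : Prop :=
  interior_map /\
  exists (n : nat) (b : 'I_n -> A),
    [/\ is_basis b, SS_invariant b & free_actions b].

Definition act2 (st : gT * gT) (a : A) : A := phi st.1 * a * phi (st.2)^-1%g.

Definition fixed_by (U : {set gT * gT}) (a : A) : Prop :=
  forall u, u \in U -> act2 u a = a.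

Definition rtrace (V U : {set gT * gT}) (a : A) : A :=
  \sum_(C in lcosets V U) act2 (repr C) a.

Definition brauer_kernel (U : {set gT * gT}) (a : A) : Prop :=
  exists (k : nat) (c : 'I_k -> O) (x : 'I_k -> A) (f : {group gT * gT} -> A),
    [/\ forall i, m (c i) /\ fixed_by U (x i),
        forall V : {group gT * gT}, fixed_by V (f V) &
        a = \sum_(i < k) c i *: x i
            + \sum_(V : {group gT * gT} | V \proper U) rtrace V U (f V)].

Definition brauer_nonzero (U : {set gT * gT}) : Prop :=
  exists a, fixed_by U a /\ ~ brauer_kernel U a.

Definition twdiag (f : gT -> gT) (P : {set gT}) : {set gT * gT} :=
  [set (f x, x) | x in P].

(* Hom_{F_S(A)}(P, Q): injective homomorphisms f : P -> Q with A(f) <> 0 *)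
Definition fmor (P Q : {set gT}) (f : gT -> gT) : Prop :=
  [/\ [&& group_set P, P \subset S, group_set Q & Q \subset S],
      {in P &, {morph f : x y / (x * y)%g}},
      {in P &, injective f}, f @: P \subset Q
    & brauer_nonzero (twdiag f P)].

Definition divisible : Prop :=
  [/\
      (forall P Q : {group gT}, P \subset Q -> Q \subset S -> fmor P Q id),
      (forall (P Q R : {set gT}) (f g : gT -> gT),
          fmor P Q f -> fmor Q R g -> fmor P R (g \o f))
    &
      (forall (P Q : {set gT}) (f : gT -> gT), fmor P Q f ->
          fmor P (f @: P) f /\
          exists g : gT -> gT, [/\ fmor (f @: P) P g,
              {in P, cancel f g} & {in f @: P, cancel g f}])].
End Algebras.

Definition alg_unit (O : idomainType) (A : algType O) (a : A) : Prop :=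
  exists a' : A, a * a' = 1 /\ a' * a = 1.

From HB Require Import structures.
From mathcomp Require Import all_boot all_order all_algebra all_fingroup all_solvable.
Set Implicit Arguments. Unset Strict Implicit. Unset Printing Implicit Defensive.
Import GRing.Theory.
Local Open Scope ring_scope.

(* If A(U) <> 0 for a subgroup U of S x S, some basis element is fixed by U: otherwise the
   coordinates of a U-fixed element, being constant on U-orbits of the basis, write it as a
   combination of orbit sums, i.e. of relative traces from proper stabilisers, so it lies in
   the kernel of the Brauer quotient. For U = Delta(f, P) this yields a basis element, hence a
   unit, y with phi(f x) y = y phi(x) on P. Conversely, let e be a basis element centralised
   by S (it exists as A(S) <> 0) and u a unit with phi(f x) u = u phi(x) on P. Then e u is
   Delta(f, P)-fixed and the e-coordinate of a u^-1 is a Delta(f, P)-invariant linear form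
   equal to 1 on e u; a relative trace from V < U multiplies such a form by the positive
   p-power |U : V|, so the form maps the Brauer kernel into m and A(f) <> 0. Thus A(f) <> 0
   exactly when f is intertwined by a unit, and products and inverses of units give the
   closure properties defining divisibility. *)

Section Ideal.
Variables (O : idomainType) (I : O -> Prop).
Hypothesis idI : is_ideal I.

Lemma ideal0 : I 0. Proof. by case: idI. Qed.

Lemma idealD x y : I x -> I y -> I (x + y).
Proof. by case: idI => _ + _; apply. Qed.

Lemma idealMl r x : I x -> I (r * x).
Proof. by case: idI => _ _; apply. Qed.

Lemma idealMr r x : I x -> I (x * r).
Proof. by rewrite mulrC; apply: idealMl. Qed.

Lemma ideal_sum J (s : seq J) (P : pred J) (F : J -> O) :
  (forall j, P j -> I (F j)) -> I (\sum_(j <- s | P j) F j).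
Proof.
by move=> IF; elim/big_rec: _ => [|j x Pj Ix]; [exact: ideal0 | exact: idealD (IF j Pj) Ix].
Qed.

End Ideal.

Section Coordinates.
Variables (O : idomainType) (A : algType O) (n : nat) (b : 'I_n -> A).
Hypothesis bB : is_basis b.

Lemma basis_inj : injective b. Proof. by case: bB. Qed.

Lemma basis_spans a : exists c : {ffun 'I_n -> O}, a == \sum_i c i *: b i.
Proof. by have [c [-> _]] := bB.2 a; exists c. Qed.

Definition coords (a : A) : {ffun 'I_n -> O} := xchoose (basis_spans a).

Lemma coordsK a : \sum_i coords a i *: b i = a.
Proof. exact/esym/eqP/(xchooseP (basis_spans a)). Qed.

Lemma coords_unique a (c : {ffun 'I_n -> O}) : a = \sum_i c i *: b i -> coords a = c.
Proof.
move=> Ea; have [c0 [_ uniq_c]] := bB.2 a.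
by rewrite -(uniq_c _ Ea) -(uniq_c _ (esym (coordsK a))).
Qed.

Definition coord (i : 'I_n) (a : A) : O := coords a i.

Fact coord_is_scalar i : scalar (coord i).
Proof.
move=> c a a'; rewrite /coord.
suff -> : coords (c *: a + a') = [ffun j => c * coords a j + coords a' j] by rewrite ffunE.
apply: coords_unique; rewrite -{1}(coordsK a) -{1}(coordsK a') scaler_sumr -big_split /=.
by apply: eq_bigr => j _; rewrite ffunE scalerDl scalerA.
Qed.

HB.instance Definition _ i :=
  GRing.isLinear.Build O A O *%R (coord i) (coord_is_scalar i).

Lemma coord_basis i j : coord i (b j) = (j == i)%:R.
Proof.
rewrite /coord (@coords_unique _ [ffun k => (j == k)%:R]) ?ffunE //.
rewrite (bigD1 j) //= big1 => [|k /negbTE]; rewrite ffunE ?eqxx ?scale1r ?addr0 //.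
by rewrite eq_sym => ->; rewrite scale0r.
Qed.

Definition coord_rmul (y : A) (i : 'I_n) (a : A) : O := coord i (a * y).

Fact coord_rmul_is_scalar y i : scalar (coord_rmul y i).
Proof. by move=> c a a'; rewrite /coord_rmul mulrDl -scalerAl linearP. Qed.

HB.instance Definition _ y i :=
  GRing.isLinear.Build O A O *%R (coord_rmul y i) (coord_rmul_is_scalar y i).

End Coordinates.

Section RelativeTraces.
Variables (O : idomainType) (A : algType O) (gT : finGroupType) (phi : gT -> A).

Fact act2_is_linear u : linear (act2 phi u).
Proof. by move=> c a a'; rewrite /act2 mulrDr mulrDl -scalerAr -scalerAl. Qed.

HB.instance Definition _ u :=
  GRing.isLinear.Build O A A *:%R (act2 phi u) (act2_is_linear u).

Fact rtrace_is_linear (V U : {set gT * gT}) : linear (rtrace phi V U).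
Proof.
move=> c a a'; rewrite /rtrace scaler_sumr -big_split /=.
by apply: eq_bigr => C _; rewrite linearP.
Qed.

HB.instance Definition _ V U :=
  GRing.isLinear.Build O A A *:%R (rtrace phi V U) (rtrace_is_linear V U).

Definition proper_trace_sum (U : {set gT * gT}) (a : A) : Prop :=
  exists2 f : {group gT * gT} -> A, forall V : {group gT * gT}, fixed_by phi V (f V) &
    a = \sum_(V : {group gT * gT} | V \proper U) rtrace phi V U (f V).

Lemma proper_trace_sum0 U : proper_trace_sum U 0.
Proof.
by exists (fun _ => 0) => [V u _|]; rewrite ?linear0 // big1 // => V _; rewrite linear0.
Qed.

Lemma proper_trace_sumD U a a' :
  proper_trace_sum U a -> proper_trace_sum U a' -> proper_trace_sum U (a + a').
Proof.
move=> [f fixf ->] [f' fixf' ->]; exists (fun V => f V + f' V).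
  by move=> V u uV; rewrite linearD /= fixf ?fixf'.
by rewrite -big_split; apply: eq_bigr => V _; rewrite linearD.
Qed.

Lemma proper_trace_sum_rtrace (U V : {group gT * gT}) a :
  V \proper U -> fixed_by phi V a -> proper_trace_sum U (rtrace phi V U a).
Proof.
move=> sVU fixa; exists (fun W => if W == V then a else 0).
  by move=> W u; case: eqP => [->|_ _]; [apply: fixa | rewrite linear0].
rewrite (bigD1 V) //= eqxx big1 ?addr0 // => W /andP[_ /negbTE->].
by rewrite linear0.
Qed.

Lemma brauer_kernel_proper_trace_sum (m : O -> Prop) U a :
  proper_trace_sum U a -> brauer_kernel m phi U a.
Proof.
case=> f fixf ->; exists 0%N, (fun _ => 0), (fun _ => 0), f.
by split=> //; [case | rewrite big_ord0 add0r].
Qed.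

End RelativeTraces.

Section BrauerKernel.
Variables (O : idomainType) (m : O -> Prop) (p : nat).
Variables (A : algType O) (gT : finGroupType) (phi : gT -> A).
Hypotheses (idm : is_ideal m) (mp : m p%:R).

Lemma pgroup_index_ideal (aT : finGroupType) (U V : {group aT}) :
  (p.-group U)%g -> V \proper U -> m #|U : V|%g%:R.
Proof.
move=> pU /andP[_]; rewrite -indexg_gt1.
have [[|k] ->] := p_natP (pnat_dvd (dvdn_indexg U V) pU) => // _.
by rewrite expnSr natrM; apply: idealMl.
Qed.

(* A relative trace from V < U contributes #|U : V| (lam (f V)), a positive p-power multiple. *)
Lemma brauer_kernel_scalar (U : {group gT * gT}) (lam : {scalar A}) a :
  (p.-group U)%g -> (forall u x, u \in U -> lam (act2 phi u x) = lam x) ->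
  brauer_kernel m phi U a -> m (lam a).
Proof.
move=> pU lamU [k [c [x [f [cm _ ->]]]]]; rewrite linearD !linear_sum /=.
apply: idealD => //.
  by apply: ideal_sum => // i _; rewrite linearZ /=; apply: idealMr => //; case: (cm i).
apply: ideal_sum => // V sVU; rewrite /rtrace linear_sum.
rewrite (eq_bigr (fun _ => lam (f V))) => [|_ /lcosetsP[z zU ->]].
  rewrite sumr_const card_lcosets -mulr_natr.
  by apply: idealMl => //; apply: pgroup_index_ideal.
apply: lamU; have /lcosetP[v vV ->] := mem_repr z (lcoset_refl V z).
by rewrite groupM // (subsetP (proper_sub sVU)).
Qed.

End BrauerKernel.

Section MorphIn.
Variables (aT rT : finGroupType) (h : aT -> rT) (P : {set aT}).
Hypotheses (gP : group_set P) (hM : {in P &, {morph h : x y / (x * y)%g}}).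

Lemma morph_in1 : h 1%g = 1%g.
Proof.
have P1 : 1%g \in P by case/group_setP: gP.
by apply: (@mulgI _ (h 1%g)); rewrite -hM // !mulg1.
Qed.

Lemma morph_in_group_set : group_set (h @: P).
Proof.
have [P1 PM] := group_setP gP; apply/group_setP; split.
  by apply/imsetP; exists 1%g; rewrite ?morph_in1.
move=> _ _ /imsetP[x xP ->] /imsetP[y yP ->].
by apply/imsetP; exists (x * y)%g; rewrite ?PM ?hM.
Qed.

End MorphIn.

Section TwistedDiagonal.
Variables (gT : finGroupType) (f : gT -> gT) (P : {set gT}).

Lemma twdiag_group_set :
  group_set P -> {in P &, {morph f : x y / (x * y)%g}} -> group_set (twdiag f P).
Proof. by move=> gP fM; apply: morph_in_group_set gP _ => x y xP yP; rewrite /= fM. Qed.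

Lemma twdiag_pgroup (pi : nat_pred) (G : {group gT}) :
  group_set P -> P \subset G -> (pi.-group G)%g -> (pi.-group (twdiag f P))%g.
Proof.
move=> gP sPG piG; rewrite pgroupE card_imset => [|x y /(congr1 snd)//].
by rewrite -pgroupE (pgroupS (H := Group gP) sPG piG).
Qed.

Lemma twdiag_sub (G : {set gT}) :
  P \subset G -> f @: P \subset G -> twdiag f P \subset setX G G.
Proof.
move=> sPG sfPG; apply/subsetP => _ /imsetP[x xP ->].
by rewrite in_setX (subsetP sfPG) ?imset_f // (subsetP sPG).
Qed.

End TwistedDiagonal.

Section Interior.
Variables (O : idomainType) (A : algType O) (gT : finGroupType) (S : {group gT}).
Variable phi : gT -> A.
Hypotheses (phi1 : phi 1%g = 1) (phiM : {in S &, forall s t, phi (s * t)%g = phi s * phi t}).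

Local Notation SS := (setX S S).

Lemma phiVr s : s \in S -> phi s * phi (s^-1)%g = 1.
Proof. by move=> sS; rewrite -phiM ?groupV // mulgV. Qed.

Lemma phiVl s : s \in S -> phi (s^-1)%g * phi s = 1.
Proof. by move=> sS; rewrite -phiM ?groupV // mulVg. Qed.

Lemma act2_1 a : act2 phi 1%g a = a.
Proof. by rewrite /act2 /= invg1 phi1 mulr1 mul1r. Qed.

Lemma act2M u v a : u \in SS -> v \in SS -> act2 phi (u * v)%g a = act2 phi u (act2 phi v a).
Proof.
case: u v => [s t] [s' t']; rewrite !in_setX /= => /andP[sS tS] /andP[sS' tS'].
by rewrite /act2 /= invMg !phiM ?groupV // !mulrA.
Qed.

Definition intertwining (f : gT -> gT) (P : {set gT}) (a : A) : Prop :=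
  {in P, forall x, phi (f x) * a = a * phi x}.

Lemma fixed_twdiagP f (P : {set gT}) a :
  P \subset S -> fixed_by phi (twdiag f P) a <-> intertwining f P a.
Proof.
move=> sPS; split=> [fixa x xP | fa _ /imsetP[x xP ->]].
  by rewrite -[in RHS](fixa (f x, x)) ?imset_f // /act2 -mulrA phiVl ?(subsetP sPS) ?mulr1.
by rewrite /act2 /= fa // -mulrA phiVr ?(subsetP sPS) ?mulr1.
Qed.

Lemma unit_conj (u u' c d : A) : u * u' = 1 -> u' * u = 1 -> c * u = u * d -> u' * c = d * u'.
Proof. by move=> uu' u'u cu; rewrite -[LHS]mulr1 -uu' mulrA -(mulrA u') cu mulrA u'u mul1r. Qed.

Lemma intertwining_comp f g (P Q : {set gT}) u v : {in P, forall x, f x \in Q} ->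
  intertwining f P u -> intertwining g Q v -> intertwining (g \o f) P (v * u).
Proof. by move=> fPQ fu gv x xP; rewrite /= mulrA gv ?fPQ // -!mulrA fu. Qed.

Lemma intertwining_inv f g (P : {set gT}) u u' : u * u' = 1 -> u' * u = 1 ->
  {in P, cancel f g} -> intertwining f P u -> intertwining g (f @: P) u'.
Proof.
move=> uu' u'u fK fu _ /imsetP[x xP ->]; rewrite fK //.
exact/esym/(unit_conj uu' u'u (fu x xP)).
Qed.

Lemma act2_twdiag_mulr f (P : {set gT}) u u' c x : P \subset S -> f @: P \subset S ->
  u * u' = 1 -> u' * u = 1 -> intertwining f P u -> x \in P ->
  act2 phi (f x, x) c * u' = act2 phi (f x, f x) (c * u').
Proof.
move=> sPS sfPS uu' u'u fu xP; have xS := subsetP sPS x xP.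
have fxS : f x \in S by rewrite (subsetP sfPS) ?imset_f.
have u'f : phi x * u' = u' * phi (f x) by exact/esym/(unit_conj uu' u'u (fu x xP)).
rewrite /act2 /= -!mulrA; congr (_ * (_ * _)).
by rewrite -[LHS]mulr1 -(phiVr fxS) mulrA -(mulrA _ u') -u'f mulrA phiVl // mul1r.
Qed.

Section InvariantBasis.
Variables (n : nat) (b : 'I_n -> A).
Hypotheses (bB : is_basis b) (bI : SS_invariant S phi b).

Local Notation coord := (coord bB).

Lemma act2_basis u i : u \in SS -> exists j, b j = act2 phi u (b i).
Proof.
case: u => [s t]; rewrite in_setX => /andP[/= sS tS].
have [j bj] : in_basis b (phi s * b i) by apply: (bI sS _).1.2; exists (b i) => //; exists i.
have [k bk] : in_basis b (b j * phi (t^-1)%g).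
  by apply: (bI (groupVr tS) _).2.2; exists (b j) => //; exists j.
by exists k; rewrite bk bj.
Qed.

(* The default [i] is only used when [u] lies outside S x S. *)
Definition act_idx (u : gT * gT) (i : 'I_n) : 'I_n :=
  odflt i [pick j | b j == act2 phi u (b i)].

Lemma act_idxE u i : u \in SS -> b (act_idx u i) = act2 phi u (b i).
Proof.
move=> uS; rewrite /act_idx; case: pickP => [j /eqP //|].
by have [j bj] := act2_basis i uS => /(_ j); rewrite bj eqxx.
Qed.

Lemma act_idx1 i : act_idx 1%g i = i.
Proof. by apply: (basis_inj bB); rewrite act_idxE ?group1 // act2_1. Qed.

Lemma act_idxM u v i : u \in SS -> v \in SS -> act_idx (u * v)%g i = act_idx u (act_idx v i).
Proof. by move=> uS vS; apply: (basis_inj bB); rewrite !act_idxE ?groupM // act2M. Qed.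

Lemma act_idxK u : u \in SS -> cancel (act_idx u) (act_idx (u^-1)%g).
Proof. by move=> uS i; rewrite -act_idxM ?groupV // mulVg act_idx1. Qed.

Lemma coord_act2 u i a : u \in SS -> coord (act_idx u i) (act2 phi u a) = coord i a.
Proof.
move=> uS; rewrite -{1}(coordsK bB a) !linear_sum /=.
rewrite (bigD1 i) //= big1 ?addr0 => [|j ji]; rewrite !linearZ /= -act_idxE // coord_basis.
  by rewrite eqxx mulr1.
by rewrite (inj_eq (can_inj (act_idxK uS))) (negbTE ji) mulr0.
Qed.

Section Orbits.
Variable U : {group gT * gT}.
Hypothesis sUS : U \subset SS.

Let inSS u : u \in U -> u \in SS. Proof. exact: subsetP. Qed.

Definition idx_stab i := [set u in U | act_idx u i == i].
Definition idx_orbit i := [set act_idx u i | u in U].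

Fact idx_stab_group_set i : group_set (idx_stab i).
Proof.
apply/group_setP; split=> [|u v]; first by rewrite inE group1 act_idx1 eqxx.
rewrite !inE => /andP[uU /eqP ui] /andP[vU /eqP vi].
by rewrite groupM // act_idxM ?(inSS uU) ?(inSS vU) // vi ui eqxx.
Qed.

Canonical idx_stab_group i := Group (idx_stab_group_set i).

Lemma fixed_basisP i : reflect (fixed_by phi U (b i)) (U \subset idx_stab i).
Proof.
apply: (iffP subsetP) => [sU u uU | fixi u uU].
  by have := sU u uU; rewrite inE uU => /eqP ui; rewrite -act_idxE ?(inSS uU) // ui.
by rewrite inE uU; apply/eqP/(basis_inj bB); rewrite act_idxE ?(inSS uU) // fixi.
Qed.

Lemma idx_orbit_refl i : i \in idx_orbit i.
Proof. by apply/imsetP; exists 1%g; rewrite // act_idx1. Qed.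

Lemma idx_orbit_sub i j : j \in idx_orbit i -> idx_orbit j \subset idx_orbit i.
Proof.
case/imsetP=> v vU -> /=; apply/subsetP => _ /imsetP[u uU ->].
by apply/imsetP; exists (u * v)%g; rewrite ?groupM // (act_idxM _ (inSS uU) (inSS vU)).
Qed.

Lemma idx_orbit_sym i j : j \in idx_orbit i -> i \in idx_orbit j.
Proof.
case/imsetP=> u uU ->; apply/imsetP; exists (u^-1)%g; rewrite ?groupV //.
by rewrite (act_idxK (inSS uU)).
Qed.

Lemma eq_idx_orbit i j : (idx_orbit j == idx_orbit i) = (j \in idx_orbit i).
Proof.
apply/eqP/idP => [<-|ji]; first exact: idx_orbit_refl.
by apply/eqP; rewrite eqEsubset idx_orbit_sub // idx_orbit_sub // idx_orbit_sym.
Qed.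

Lemma rtrace_idx_stab i : rtrace phi (idx_stab i) U (b i) = \sum_(j in idx_orbit i) b j.
Proof.
pose h C := act_idx (repr C) i.
have hE z : z \in U -> h (z *: idx_stab i)%g = act_idx z i.
  move=> zU; rewrite /h; have /lcosetP[v] := mem_repr z (lcoset_refl (idx_stab i) z).
  by rewrite inE => /andP[vU /eqP vi] ->; rewrite (act_idxM _ (inSS zU) (inSS vU)) vi.
have reprU C : C \in lcosets (idx_stab i) U -> repr C \in U.
  case/lcosetsP=> z zU ->; have /lcosetP[v] := mem_repr z (lcoset_refl (idx_stab i) z).
  by rewrite inE => /andP[vU _] ->; rewrite groupM.
have -> : idx_orbit i = h @: lcosets (idx_stab i) U.
  apply/setP => j; apply/imsetP/imsetP => [[u uU ->]|[_ /lcosetsP[z zU ->] ->]].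
    by exists (u *: idx_stab i)%g; [apply/lcosetsP; exists u | rewrite hE].
  by exists z; rewrite ?hE.
rewrite big_imset /= => [|_ _ /lcosetsP[z1 z1U ->] /lcosetsP[z2 z2U ->]].
  by apply: eq_bigr => C /reprU /inSS CS; rewrite act_idxE.
rewrite !hE // => z12; apply/lcoset_eqP; rewrite mem_lcoset inE groupM ?groupV //=.
by rewrite (act_idxM _ (inSS (groupVr z2U)) (inSS z1U)) z12 (act_idxK (inSS z2U)).
Qed.

Lemma coord_fixed_orbit a i j :
  fixed_by phi U a -> j \in idx_orbit i -> coord j a = coord i a.
Proof. by move=> fixa /imsetP[u uU ->]; rewrite -{1}(fixa u uU) coord_act2 ?(inSS uU). Qed.

Lemma fixed_proper_trace_sum a : (forall i, ~ fixed_by phi U (b i)) ->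
  fixed_by phi U a -> proper_trace_sum phi U a.
Proof.
move=> nofix fixa; rewrite -(coordsK bB a) (partition_big_imset idx_orbit) /=.
apply: big_ind => [||_ /imsetP[i _ ->]]; [exact: proper_trace_sum0 | exact: proper_trace_sumD |].
rewrite (eq_bigr (fun j => coord i a *: b j)) => [|j]; last first.
  by rewrite eq_idx_orbit => ji; congr (_ *: _); apply: coord_fixed_orbit.
rewrite (eq_bigl (mem (idx_orbit i))) => [|j]; last by rewrite /= eq_idx_orbit.
rewrite -scaler_sumr -rtrace_idx_stab -linearZ.
apply: proper_trace_sum_rtrace.
  rewrite properE; apply/andP; split; last by apply/negP => /fixed_basisP; apply: nofix.
  by apply/subsetP => u /setIdP[].
by move=> u /setIdP[uU /eqP ui]; rewrite linearZ /= -act_idxE ?(inSS uU) // ui.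
Qed.

End Orbits.

Lemma brauer_nonzero_fixed_basis (m : O -> Prop) (U : {group gT * gT}) :
  U \subset SS -> brauer_nonzero m phi U -> exists i, fixed_by phi U (b i).
Proof.
move=> sUS [a [fixa nker]].
have [/existsP[i /(fixed_basisP sUS) fixi] | nofix] := boolP [exists i, U \subset idx_stab U i].
  by exists i.
case: nker; apply/brauer_kernel_proper_trace_sum/(fixed_proper_trace_sum sUS) => // i.
by move/(fixed_basisP sUS) => sU; case/existsP: nofix; exists i.
Qed.

Lemma brauer_nonzero_intertwining_basis (m : O -> Prop) f (P : {set gT}) :
  group_set P -> P \subset S -> f @: P \subset S -> {in P &, {morph f : x y / (x * y)%g}} ->
  brauer_nonzero m phi (twdiag f P) -> exists i, intertwining f P (b i).
Proof.
move=> gP sPS sfPS fM nz.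
have [i fixi] := brauer_nonzero_fixed_basis
  (U := Group (twdiag_group_set gP fM)) (twdiag_sub sPS sfPS) nz.
by exists i; apply/(fixed_twdiagP _ _ sPS).
Qed.

Lemma coord_act2_fixed u i a :
  u \in SS -> act2 phi u (b i) = b i -> coord i (act2 phi u a) = coord i a.
Proof.
move=> uS fixi; suff ui : act_idx u i = i by rewrite -{1}ui coord_act2.
by apply: (basis_inj bB); rewrite act_idxE.
Qed.

End InvariantBasis.

End Interior.

Section Divisibility.
Variables (O : idomainType) (m : O -> Prop) (p : nat) (A : algType O).
Variables (gT : finGroupType) (S : {group gT}) (phi : gT -> A).
Hypotheses (idm : is_ideal m) (m1 : ~ m 1) (mp : m p%:R) (pS : (p.-group S)%g).
Hypotheses (phi1 : phi 1%g = 1) (phiM : {in S &, forall s t, phi (s * t)%g = phi s * phi t}).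
Variables (n : nat) (b : 'I_n -> A).
Hypotheses (bB : is_basis b) (bI : SS_invariant S phi b) (bU : forall i, alg_unit (b i)).
Variable ie : 'I_n.
Hypothesis e_central : intertwining phi id S (b ie).

Lemma brauer_nonzero_twdiag_unit f (P : {set gT}) u :
  group_set P -> P \subset S -> f @: P \subset S -> {in P &, {morph f : x y / (x * y)%g}} ->
  alg_unit u -> intertwining phi f P u -> brauer_nonzero m phi (twdiag f P).
Proof.
move=> gP sPS sfPS fM [u' [uu' u'u]] fu.
have fxS x : x \in P -> f x \in S by move=> xP; rewrite (subsetP sfPS) ?imset_f.
exists (b ie * u); split.
  apply/(fixed_twdiagP phi1 phiM _ _ sPS) => x xP.
  by rewrite mulrA e_central ?fxS // -mulrA fu // mulrA.
pose U := Group (twdiag_group_set gP fM).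
have lam1 : coord_rmul bB u' ie (b ie * u) = 1.
  by rewrite /coord_rmul -mulrA uu' mulr1 coord_basis eqxx.
move=> ker; case: m1; rewrite -lam1.
apply: (brauer_kernel_scalar idm mp (U := U) _ _ ker) => [|_ c /imsetP[x xP ->]].
  exact: twdiag_pgroup gP sPS pS.
rewrite /= /coord_rmul (act2_twdiag_mulr phi1 phiM _ sPS sfPS uu' u'u fu xP).
apply: (coord_act2_fixed phi1 phiM bB bI); first by rewrite in_setX fxS.
by rewrite /act2 /= e_central ?fxS // -mulrA (phiVr phi1 phiM (fxS x xP)) mulr1.
Qed.

Lemma fmor_intertwiner (P Q : {set gT}) f :
  fmor m S phi P Q f -> exists2 u, alg_unit u & intertwining phi f P u.
Proof.
case=> /and4P[gP sPS _ sQS] fM _ sfPQ nz.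
have [i fi] := brauer_nonzero_intertwining_basis phi1 phiM bB bI gP sPS
  (subset_trans sfPQ sQS) fM nz.
by exists (b i); [apply: bU | apply: fi].
Qed.

Lemma intertwiner_fmor (P Q : {set gT}) f u :
  [&& group_set P, P \subset S, group_set Q & Q \subset S] ->
  {in P &, {morph f : x y / (x * y)%g}} -> {in P &, injective f} -> f @: P \subset Q ->
  alg_unit u -> intertwining phi f P u -> fmor m S phi P Q f.
Proof.
move=> PQS fM fI sfPQ uU fu; split=> //; case/and4P: PQS => gP sPS _ sQS.
exact: brauer_nonzero_twdiag_unit gP sPS (subset_trans sfPQ sQS) fM uU fu.
Qed.

Lemma alg_unitM (u v : A) : alg_unit u -> alg_unit v -> alg_unit (u * v).
Proof.
move=> [u' [uu' u'u]] [v' [vv' v'v]]; exists (v' * u').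
by rewrite !mulrA -(mulrA u) vv' mulr1 uu' -(mulrA v') u'u mulr1 v'v.
Qed.

Lemma fmor_incl (P Q : {group gT}) : P \subset Q -> Q \subset S -> fmor m S phi P Q id.
Proof.
move=> sPQ sQS; apply: (intertwiner_fmor (u := 1)) => //.
- by rewrite !groupP sQS (subset_trans sPQ sQS).
- by rewrite imset_id.
- by exists 1; rewrite mulr1.
by move=> x _; rewrite mulr1 mul1r.
Qed.

Lemma fmor_comp (P Q R : {set gT}) f g :
  fmor m S phi P Q f -> fmor m S phi Q R g -> fmor m S phi P R (g \o f).
Proof.
move=> fPQ gQR; have [u uU fu] := fmor_intertwiner fPQ; have [v vU gv] := fmor_intertwiner gQR.
case: fPQ gQR => /and4P[gP sPS _ _] fM fI sfPQ _ [/and4P[_ _ gR sRS] gM gI sgQR _].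
have fPQ x : x \in P -> f x \in Q by move=> xP; rewrite (subsetP sfPQ) ?imset_f.
apply: (intertwiner_fmor (u := v * u)); rewrite ?gP ?sPS ?gR ?sRS //.
- by move=> x y xP yP /=; rewrite fM ?gM ?fPQ.
- by move=> x y xP yP /= /gI /fI; apply; rewrite ?fPQ.
- by rewrite imset_comp (subset_trans (imsetS g sfPQ) sgQR).
- exact: alg_unitM.
exact: intertwining_comp fPQ fu gv.
Qed.

Lemma fmor_iso (P Q : {set gT}) f : fmor m S phi P Q f ->
  fmor m S phi P (f @: P) f /\
  exists g, [/\ fmor m S phi (f @: P) P g, {in P, cancel f g} & {in f @: P, cancel g f}].
Proof.
move=> fPQ; have [u [u' [uu' u'u]] fu] := fmor_intertwiner fPQ.
case: fPQ => /and4P[gP sPS _ sQS] fM fI sfPQ _; have sfPS := subset_trans sfPQ sQS.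
have gfP := morph_in_group_set gP fM.
pose g y := odflt y [pick x in P | f x == y].
have gK : {in P, cancel f g}.
  move=> x xP; rewrite /g; case: pickP => [x' /andP[x'P /eqP]|/(_ x)]; last by rewrite xP eqxx.
  by move/fI; apply.
have fK : {in f @: P, cancel g f} by move=> _ /imsetP[x xP ->]; rewrite gK.
split; first by apply: (intertwiner_fmor (u := u)); rewrite ?gP ?sPS ?gfP ?sfPS //; exists u'.
exists g; split=> //; apply: (intertwiner_fmor (u := u')); rewrite ?gP ?sPS ?gfP ?sfPS //.
- by move=> _ _ /imsetP[x xP ->] /imsetP[y yP ->]; rewrite -fM ?gK // (group_setP gP).2.
- by move=> y z /fK {2}<- /fK {2}<- ->.
- by apply/subsetP => _ /imsetP[_ /imsetP[x xP ->] ->]; rewrite gK.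
- by exists u.
exact: intertwining_inv uu' u'u gK fu.
Qed.

Lemma divisible_central_basis : divisible m S phi.
Proof. by split; [exact: fmor_incl | exact: fmor_comp | exact: fmor_iso]. Qed.

End Divisibility.

Theorem lemma2p7 (O : idomainType) (m : O -> Prop) (p : nat)
    (A : algType O) (gT : finGroupType) (S : {group gT}) (phi : gT -> A) :
  standing_O m p ->
  (p.-group S)%g ->
  bifree S phi ->
  brauer_nonzero m phi (twdiag id S) ->
  (exists (n : nat) (b : 'I_n -> A),
     [/\ is_basis b, SS_invariant S phi b &
         forall i, alg_unit (b i)]) ->
  divisible m S phi.
Proof.
move=> [[idm m1 _] _ _ _ [_ mp]] pS [[phi1 phiM] _] nzS [n [b [bB bI bU]]].
have sidS : id @: S \subset S by rewrite imset_id.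
have [ie e_central] := brauer_nonzero_intertwining_basis phi1 phiM bB bI
  (groupP S) (subxx S) sidS (fun _ _ _ _ => erefl) nzS.
exact: (divisible_central_basis idm m1 mp pS phi1 phiM bB bI bU e_central).
Qed.
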